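(* Let $Y$ be a first-countable topological space such that $\mathrm{H}_1([0,1],Y)\subseteq \mathrm{B}_1([0,1],Y)$. Then $Y$ is locally almost arcwise connected.
   Context: $\mathrm{H}_1(X,Y)$: mappings $f:X\to Y$ with $f^{-1}(V)$ an $F_\sigma$-set for every open $V\subseteq Y$. $\mathrm{B}_1(X,Y)$: pointwise limits of sequences of continuous mappings $X\to Y$. Two sets $A,B$ are joined by an arc in a set $S$ if there is a continuous $\gamma:[0,1]\to Y$ with $\gamma([0,1])\subseteq S$, $\gamma(0)\in A$, $\gamma(1)\in B$. $Y$ is locally almost arcwise connected at $y$ if for every neighborhood $V$ of $y$ there is a neighborhood $U\subseteq V$ of $y$ such that each pair of nonempty open subsets of $U$ can be joined by an arc in $\overline V$; $Y$ is locally almost arcwise connected if this holds at every point. *)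

From Stdlib Require Import Reals.
Open Scope R_scope.

Record topology (Y : Type) := mkTopology {
  t_open : (Y -> Prop) -> Prop;
  t_open_full : t_open (fun _ => True);
  t_open_inter : forall A B, t_open A -> t_open B -> t_open (fun y => A y /\ B y);
  t_open_union : forall F : (Y -> Prop) -> Prop,
      (forall A, F A -> t_open A) -> t_open (fun y => exists A, F A /\ A y)
}.
Arguments t_open {Y} _ _.

Definition nbhd {Y} (T : topology Y) (y : Y) (N : Y -> Prop) : Prop :=
  exists U, t_open T U /\ U y /\ forall z, U z -> N z.

Definition closure {Y} (T : topology Y) (S : Y -> Prop) (y : Y) : Prop :=
  forall W, t_open T W -> W y -> exists z, W z /\ S z.

Definition first_countable {Y} (T : topology Y) : Prop :=
  forall y, exists B : nat -> (Y -> Prop),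
    (forall n, nbhd T y (B n)) /\
    (forall N, nbhd T y N -> exists n, forall z, B n z -> N z).

Definition converges {Y} (T : topology Y) (u : nat -> Y) (y : Y) : Prop :=
  forall V, t_open T V -> V y -> exists N, forall n, (N <= n)%nat -> V (u n).

Definition I01 : Type := { x : R | 0 <= x <= 1 }.

Definition i0 : I01 := exist _ 0 (conj (Rle_refl 0) Rle_0_1).
Definition i1 : I01 := exist _ 1 (conj Rle_0_1 (Rle_refl 1)).

Definition open_I01 (A : I01 -> Prop) : Prop :=
  forall t, A t -> exists eps, 0 < eps /\
    forall s : I01, Rabs (proj1_sig s - proj1_sig t) < eps -> A s.

Definition closed_I01 (A : I01 -> Prop) : Prop := open_I01 (fun t => ~ A t).

Definition Fsigma_I01 (A : I01 -> Prop) : Prop :=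
  exists C : nat -> (I01 -> Prop),
    (forall n, closed_I01 (C n)) /\ (forall t, A t <-> exists n, C n t).

Definition continuous_I01 {Y} (T : topology Y) (f : I01 -> Y) : Prop :=
  forall V, t_open T V -> open_I01 (fun t => V (f t)).

Definition Baire_H1 {Y} (T : topology Y) (f : I01 -> Y) : Prop :=
  forall V, t_open T V -> Fsigma_I01 (fun t => V (f t)).

Definition Baire_B1 {Y} (T : topology Y) (f : I01 -> Y) : Prop :=
  exists g : nat -> I01 -> Y,
    (forall n, continuous_I01 T (g n)) /\
    (forall t, converges T (fun n => g n t) (f t)).

Definition joined_by_arc {Y} (T : topology Y) (A B S : Y -> Prop) : Prop :=
  exists g : I01 -> Y, continuous_I01 T g /\ (forall t, S (g t)) /\
    A (g i0) /\ B (g i1).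

Definition loc_almost_arcwise_connected_at {Y} (T : topology Y) (y : Y) : Prop :=
  forall V, nbhd T y V ->
    exists U, nbhd T y U /\ (forall z, U z -> V z) /\
      forall A B : Y -> Prop,
        t_open T A -> t_open T B ->
        (exists a, A a) -> (exists b, B b) ->
        (forall z, A z -> U z) -> (forall z, B z -> U z) ->
        joined_by_arc T A B (closure T V).

Definition loc_almost_arcwise_connected {Y} (T : topology Y) : Prop :=
  forall y, loc_almost_arcwise_connected_at T y.

From Stdlib Require Import Reals Lra Lia List Classical ClassicalEpsilon Cantor.
Import ListNotations.
Open Scope R_scope.

(* Suppose Y is not locally almost arcwise connected at y, as witnessed by V. Along a
   shrinking base U_n of open neighbourhoods of y inside V pick open A_n, B_n in U_n,
   with points a_n, b_n, that cannot be joined by an arc in cl V. Fix a family of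
   intervals [p_n, q_n] in [0,1], with pairwise distinct endpoints, such that every
   nondegenerate interval contains one of them, and let f be y except f(p_n) = a_n and
   f(q_n) = b_n. As a_n, b_n -> y, preimages of open sets are cofinite or countable, so
   f is in H_1, hence f is a pointwise limit of continuous g_j. As f takes values in an
   open subset of V, the closed sets {t | forall j >= k, g_j t in cl V} cover [0,1]; by
   the Baire category theorem one contains some [p_n, q_n], and for large j the
   restriction of g_j to [p_n, q_n] is an arc in cl V from A_n to B_n. *)

Local Notation ival := (@proj1_sig R (fun x => 0 <= x <= 1)).

Lemma odd_mul_pow2_inj (x z u v : nat) :
  ((2 * u + 1) * 2 ^ x = (2 * v + 1) * 2 ^ z)%nat -> u = v /\ x = z.
Proof.
  assert (Hdbl : forall k e, ((2 * k + 1) * 2 ^ S e = 2 * ((2 * k + 1) * 2 ^ e))%nat)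
    by (intros; rewrite Nat.pow_succ_r'; ring).
  revert z; induction x as [|x IH]; intros [|z] H; rewrite ?Hdbl in H;
    rewrite ?Nat.pow_0_r, ?Nat.mul_1_r in H.
  - lia.
  - set (w := ((2 * v + 1) * 2 ^ z)%nat) in H; lia.
  - set (w := ((2 * u + 1) * 2 ^ x)%nat) in H; lia.
  - destruct (IH z ltac:(lia)) as [-> ->]; auto.
Qed.

Lemma Rdiv_pow2_eq (a b x z : nat) :
  INR a / 2 ^ x = INR b / 2 ^ z -> (a * 2 ^ z = b * 2 ^ x)%nat.
Proof.
  intro H. apply INR_eq. rewrite !mult_INR, !pow_INR.
  assert (0 < 2 ^ x) by (apply pow_lt; lra).
  assert (0 < 2 ^ z) by (apply pow_lt; lra).
  replace (INR 2) with 2 by (simpl; lra).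
  apply (Rmult_eq_reg_r (/ (2 ^ x * 2 ^ z))).
  - replace (INR a * 2 ^ z * / (2 ^ x * 2 ^ z)) with (INR a / 2 ^ x) by (field; lra).
    rewrite H. field; lra.
  - apply Rinv_neq_0_compat; nra.
Qed.

Definition odd_dyadic (m j : nat) : R := INR (2 * j + 1) / 2 ^ m.

Lemma odd_dyadic_inj m j m' j' : odd_dyadic m j = odd_dyadic m' j' -> m = m' /\ j = j'.
Proof.
  intro H. apply Rdiv_pow2_eq, odd_mul_pow2_inj in H. destruct H; auto.
Qed.

(* Through the Cantor enumeration [of_nat], n runs over all intervals
   [(4i+1)/2^(m+2), (4i+3)/2^(m+2)]; their endpoints are distinct odd dyadics. *)
Definition dyadic_left (n : nat) : R := odd_dyadic (fst (of_nat n) + 2) (2 * snd (of_nat n)).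
Definition dyadic_right (n : nat) : R :=
  odd_dyadic (fst (of_nat n) + 2) (2 * snd (of_nat n) + 1).

Lemma of_nat_inj n n' : of_nat n = of_nat n' -> n = n'.
Proof. intro H. rewrite <- (cancel_to_of n), <- (cancel_to_of n'), H. reflexivity. Qed.

Lemma dyadic_left_inj n n' : dyadic_left n = dyadic_left n' -> n = n'.
Proof.
  unfold dyadic_left; intro H; apply odd_dyadic_inj in H.
  apply of_nat_inj, injective_projections; lia.
Qed.

Lemma dyadic_right_inj n n' : dyadic_right n = dyadic_right n' -> n = n'.
Proof.
  unfold dyadic_right; intro H; apply odd_dyadic_inj in H.
  apply of_nat_inj, injective_projections; lia.
Qed.

Lemma dyadic_left_neq_right n n' : dyadic_left n <> dyadic_right n'.
Proof. unfold dyadic_left, dyadic_right; intro H; apply odd_dyadic_inj in H; lia. Qed.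

Lemma dyadic_left_nonneg n : 0 <= dyadic_left n.
Proof.
  unfold dyadic_left, odd_dyadic. apply Rle_mult_inv_pos; [apply pos_INR | apply pow_lt; lra].
Qed.

Lemma dyadic_left_lt_right n : dyadic_left n < dyadic_right n.
Proof.
  unfold dyadic_left, dyadic_right, odd_dyadic.
  apply Rmult_lt_compat_r; [apply Rinv_0_lt_compat, pow_lt; lra | apply lt_INR; lia].
Qed.

Lemma INR_le_pow2 n : INR n <= 2 ^ n.
Proof.
  induction n as [|n IH]; [simpl; lra|].
  rewrite S_INR; simpl. assert (1 <= 2 ^ n) by (apply pow_R1_Rle; lra). lra.
Qed.

Lemma dyadic_interval_dense l r :
  0 <= l -> l < r -> exists n, l <= dyadic_left n /\ dyadic_right n <= r.
Proof.
  intros Hl Hlr.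
  destruct (archimed_cor1 ((r - l) / 2) ltac:(lra)) as [M [HM HM0]].
  assert (Hpow : 0 < 2 ^ M) by (apply pow_lt; lra).
  assert (Hstep : / 2 ^ M < (r - l) / 2).
  { apply (Rle_lt_trans _ (/ INR M)); [|exact HM].
    apply Rinv_le_contravar; [apply lt_0_INR; lia | apply INR_le_pow2]. }
  (* The witness is [(u + 1/4) / 2^M, (u + 3/4) / 2^M] with u = up (l 2^M), which
     lies in [l, l + 2 / 2^M]. *)
  destruct (archimed (l * 2 ^ M)) as [Hu1 Hu2].
  assert (Hu0 : (0 < up (l * 2 ^ M))%Z) by (apply lt_IZR; simpl; nra).
  set (i := Z.to_nat (up (l * 2 ^ M))).
  assert (Hi : INR i = IZR (up (l * 2 ^ M))).
  { unfold i. rewrite INR_IZR_INZ, Znat.Z2Nat.id; auto; lia. }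
  exists (to_nat (M, i)). unfold dyadic_left, dyadic_right, odd_dyadic.
  rewrite cancel_of_to; simpl fst; simpl snd. rewrite pow_add.
  repeat (rewrite plus_INR || rewrite mult_INR).
  rewrite Hi. simpl (INR 2); simpl (INR 1); simpl (2 ^ 2).
  set (u := IZR (up (l * 2 ^ M))) in *.
  assert (Hinv : 0 < / 2 ^ M) by (apply Rinv_0_lt_compat; lra).
  assert (El : l = l * 2 ^ M * / 2 ^ M) by (field; lra).
  split.
  - apply (Rle_trans _ (u * / 2 ^ M)); [rewrite El at 1; nra|].
    apply (Rle_trans _ ((u + / 4) * / 2 ^ M)); [nra | apply Req_le; field; lra].
  - apply (Rle_trans _ ((u + 3 / 4) * / 2 ^ M)); [apply Req_le; field; lra|].
    assert (u * / 2 ^ M <= l + / 2 ^ M) by (rewrite El at 1; nra). nra.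
Qed.

Lemma nested_intervals_meet (l r : nat -> R) :
  Un_growing l -> Un_decreasing r -> (forall k, l k <= r k) ->
  exists L, forall k, l k <= L <= r k.
Proof.
  intros Hl Hr Hlr.
  assert (Hcross : forall k m, l m <= r k).
  { intros k m. destruct (Nat.le_ge_cases k m) as [Hkm|Hmk].
    - apply (Rle_trans _ (r m)); [apply Hlr | apply (decreasing_prop r k m Hr Hkm)].
    - apply (Rle_trans _ (l k)); [apply Rge_le, (growing_prop l k m Hl Hmk) | apply Hlr]. }
  destruct (completeness (fun v => exists m, v = l m)) as [L [HL1 HL2]].
  - exists (r 0%nat). intros v [m ->]. apply Hcross.
  - exists (l 0%nat). exists 0%nat. reflexivity.
  - exists L. intro k. split.
    + apply HL1. exists k. reflexivity.
    + apply HL2. intros v [m ->]. apply Hcross.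
Qed.

Lemma closed_I01_avoid_subinterval (E : I01 -> Prop) l r :
  closed_I01 E -> l < r -> ~ (forall t, l <= ival t <= r -> E t) ->
  exists l' r', l <= l' /\ l' < r' /\ r' <= r /\ forall t, l' <= ival t <= r' -> ~ E t.
Proof.
  intros HE Hlr Hnot.
  apply not_all_ex_not in Hnot as [t Ht]. apply imply_to_and in Ht as [Hlt HEt].
  destruct (HE t HEt) as [eps [Heps Hball]].
  exists (Rmax l (ival t - eps / 2)), (Rmin r (ival t + eps / 2)).
  pose proof (Rmax_l l (ival t - eps / 2)). pose proof (Rmax_r l (ival t - eps / 2)).
  pose proof (Rmin_l r (ival t + eps / 2)). pose proof (Rmin_r r (ival t + eps / 2)).
  repeat split; try lra.
  - apply Rmax_lub_lt; apply Rmin_glb_lt; lra.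
  - intros s Hs. apply Hball. apply Rabs_def1; lra.
Qed.

Definition proper_subinterval : Type := { lr : R * R | 0 <= fst lr < snd lr /\ snd lr <= 1 }.

Lemma Baire_I01 (E : nat -> I01 -> Prop) :
  (forall k, closed_I01 (E k)) -> (forall t, exists k, E k t) ->
  exists k l r, 0 <= l < r /\ r <= 1 /\ forall t, l <= ival t <= r -> E k t.
Proof.
  intros HE Hcov. apply NNPP; intro Hnone.
  set (lo := fun I : proper_subinterval => fst (proj1_sig I)).
  set (hi := fun I : proper_subinterval => snd (proj1_sig I)).
  assert (Hstep : forall kI : nat * proper_subinterval, exists J : proper_subinterval,
    lo (snd kI) <= lo J /\ hi J <= hi (snd kI) /\
    forall t, lo J <= ival t <= hi J -> ~ E (fst kI) t).
  { intros [k [[l r] Hlr]]; simpl in *.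
    destruct (closed_I01_avoid_subinterval (E k) l r (HE k)) as (l' & r' & H1 & H2 & H3 & H4).
    - lra.
    - intro Hin. apply Hnone. exists k, l, r. tauto.
    - unshelve eexists (exist _ (l', r') _); [simpl; repeat split; lra|].
      unfold lo, hi; simpl. auto. }
  (* Nested intervals with I (S k) disjoint from E k meet in a point lying in no E k. *)
  destruct (choice _ Hstep) as [next Hnext].
  set (I0 := exist _ (0, 1) (conj (conj (Rle_refl 0) Rlt_0_1) (Rle_refl 1)) : proper_subinterval).
  set (I := fix I k := match k with 0%nat => I0 | S k => next (k, I k) end).
  destruct (nested_intervals_meet (fun k => lo (I k)) (fun k => hi (I k))) as [L HL].
  - intro k. apply (Hnext (k, I k)).
  - intro k. apply (Hnext (k, I k)).
  - intro k. destruct (proj2_sig (I k)). unfold lo, hi. lra.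
  - assert (HL01 : 0 <= L <= 1).
    { destruct (HL 0%nat) as [H0 H1]. unfold lo, hi in H0, H1; simpl in H0, H1. lra. }
    destruct (Hcov (exist _ L HL01)) as [k Hk].
    apply (proj2 (proj2 (Hnext (k, I k))) (exist _ L HL01)); [apply (HL (S k)) | exact Hk].
Qed.

Lemma I01_eq (s t : I01) : ival s = ival t -> s = t.
Proof.
  destruct s as [s Hs], t as [t Ht]; simpl; intros ->. f_equal. apply proof_irrelevance.
Qed.

Lemma closed_I01_or (A B : I01 -> Prop) :
  closed_I01 A -> closed_I01 B -> closed_I01 (fun t => A t \/ B t).
Proof.
  intros HA HB t Ht.
  destruct (HA t (fun h => Ht (or_introl h))) as [e1 [He1 H1]].
  destruct (HB t (fun h => Ht (or_intror h))) as [e2 [He2 H2]].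
  exists (Rmin e1 e2). split; [apply Rmin_glb_lt; lra|].
  pose proof (Rmin_l e1 e2). pose proof (Rmin_r e1 e2).
  intros s Hs [h|h]; [apply (H1 s) | apply (H2 s)]; auto; lra.
Qed.

Lemma closed_I01_forall {I : Type} (P : I -> Prop) (C : I -> I01 -> Prop) :
  (forall i, P i -> closed_I01 (C i)) -> closed_I01 (fun t => forall i, P i -> C i t).
Proof.
  intros HC t Ht.
  apply not_all_ex_not in Ht as [i Hi]. apply imply_to_and in Hi as [HPi HCi].
  destruct (HC i HPi t HCi) as [eps [Heps Hball]].
  exists eps. split; [exact Heps|]. intros s Hs Hall. exact (Hball s Hs (Hall i HPi)).
Qed.

Lemma list_separated (l : list R) (v : R) :
  exists eps, 0 < eps /\ forall x, In x l -> x <> v -> eps <= Rabs (v - x).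
Proof.
  induction l as [|x0 l [eps [Heps Hsep]]].
  - exists 1. split; [lra | intros x []].
  - destruct (Req_dec x0 v) as [E|E].
    + exists eps. split; [exact Heps|]. intros x [<-|Hx] Hne; [contradiction | auto].
    + assert (Hd : 0 < Rabs (v - x0)) by (apply Rabs_pos_lt; lra).
      exists (Rmin eps (Rabs (v - x0))). split; [apply Rmin_glb_lt; lra|].
      intros x [<-|Hx] Hne; [apply Rmin_r|].
      apply (Rle_trans _ eps); [apply Rmin_l | auto].
Qed.

Lemma closed_I01_finite (l : list R) (P : I01 -> Prop) :
  closed_I01 (fun t => In (ival t) l /\ P t).
Proof.
  intros t Ht. destruct (list_separated l (ival t)) as [eps [Heps Hsep]].
  exists eps. split; [exact Heps|]. intros s Hs [Hin HP].
  destruct (Req_dec (ival s) (ival t)) as [E|E].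
  - apply I01_eq in E. subst s. auto.
  - specialize (Hsep _ Hin E). rewrite Rabs_minus_sym in Hs. lra.
Qed.

Definition far_from (l : list R) (r : R) (t : I01) : Prop :=
  forall x, In x l -> r <= Rabs (ival t - x).

Lemma closed_far_from l r : closed_I01 (far_from l r).
Proof.
  intros t Ht. apply not_all_ex_not in Ht as [x Hx]. apply imply_to_and in Hx as [Hin Hx].
  apply Rnot_le_lt in Hx.
  exists (r - Rabs (ival t - x)). split; [lra|]. intros s Hs Hfar.
  pose proof (Hfar x Hin). pose proof (Rabs_triang (ival s - ival t) (ival t - x)).
  replace (ival s - ival t + (ival t - x)) with (ival s - x) in * by ring. lra.
Qed.

Lemma far_from_exists (l : list R) (t : I01) :
  ~ In (ival t) l -> exists k, far_from l (/ INR (S k)) t.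
Proof.
  intro Ht. destruct (list_separated l (ival t)) as [eps [Heps Hsep]].
  destruct (archimed_cor1 eps Heps) as [K [HK HK0]].
  exists (pred K). replace (S (pred K)) with K by lia.
  intros x Hx. apply Rlt_le, (Rlt_le_trans _ eps); [exact HK|].
  apply Hsep; [exact Hx | intros ->; contradiction].
Qed.

Lemma far_from_notin l k t : far_from l (/ INR (S k)) t -> ~ In (ival t) l.
Proof.
  intros Hfar Hin. specialize (Hfar _ Hin). rewrite Rminus_diag, Rabs_R0 in Hfar.
  assert (0 < / INR (S k)) by (apply Rinv_0_lt_compat, lt_0_INR; lia). lra.
Qed.

(* Preimages of open sets are cofinite when they contain y and countable otherwise. *)
Lemma Baire_H1_of_sparse_deviation {Y} (T : topology Y) (f : I01 -> Y) (y : Y)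
    (c : nat -> list R) :
  (forall t, f t <> y -> exists n, In (ival t) (c n)) ->
  (forall W, t_open T W -> W y -> exists l, forall t, ~ W (f t) -> In (ival t) l) ->
  Baire_H1 T f.
Proof.
  intros Hcount Hfinite W HW. destruct (classic (W y)) as [Wy|Wy].
  - destruct (Hfinite W HW Wy) as [l Hl].
    exists (fun k t => far_from l (/ INR (S k)) t \/ (In (ival t) l /\ W (f t))). split.
    + intro k. apply closed_I01_or; [apply closed_far_from | apply closed_I01_finite].
    + intro t. split.
      * intro HWt. destruct (classic (In (ival t) l)) as [Hin|Hin].
        -- exists 0%nat. right. auto.
        -- destruct (far_from_exists l t Hin) as [k Hk]. exists k. left. exact Hk.
      * intros [k [Hk|[_ HWt]]]; [|exact HWt].
        apply NNPP. intro HWt. exact (far_from_notin l k t Hk (Hl t HWt)).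
  - exists (fun k t => In (ival t) (c k) /\ W (f t)). split.
    + intro k. apply closed_I01_finite.
    + intro t. split.
      * intro HWt. destruct (Hcount t) as [n Hn]; [intros E; rewrite E in HWt; auto|].
        exists n. auto.
      * intros [k [_ HWt]]. exact HWt.
Qed.

Lemma closure_incl {Y} (T : topology Y) (S : Y -> Prop) z : S z -> closure T S z.
Proof. intros Sz W _ Wz. exists z. auto. Qed.

Lemma closed_I01_closure_preimage {Y} (T : topology Y) (S : Y -> Prop) (g : I01 -> Y) :
  continuous_I01 T g -> closed_I01 (fun t => closure T S (g t)).
Proof.
  intros Hg t Ht. unfold closure in Ht.
  apply not_all_ex_not in Ht as [W HW]. apply imply_to_and in HW as [HWo HW].
  apply imply_to_and in HW as [Wgt HW].
  destruct (Hg W HWo t Wgt) as [eps [Heps Hball]].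
  exists eps. split; [exact Heps|]. intros s Hs Hcl.
  apply HW, (Hcl W HWo), Hball, Hs.
Qed.

Lemma continuous_I01_comp_contraction {Y} (T : topology Y) (g : I01 -> Y) (h : I01 -> I01) :
  continuous_I01 T g ->
  (forall s s', Rabs (ival (h s') - ival (h s)) <= Rabs (ival s' - ival s)) ->
  continuous_I01 T (fun s => g (h s)).
Proof.
  intros Hg Hh V HV s Vs. destruct (Hg V HV (h s) Vs) as [eps [Heps Hball]].
  exists eps. split; [exact Heps|]. intros s' Hs'. apply Hball.
  apply (Rle_lt_trans _ _ _ (Hh s s') Hs').
Qed.

Lemma affine_in_I01 p q s : 0 <= p <= q /\ q <= 1 -> 0 <= s <= 1 -> 0 <= p + s * (q - p) <= 1.
Proof. intros; nra. Qed.

Definition affine_I01 (p q : R) (Hpq : 0 <= p <= q /\ q <= 1) (s : I01) : I01 :=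
  exist _ (p + ival s * (q - p)) (affine_in_I01 p q (ival s) Hpq (proj2_sig s)).

Lemma affine_I01_contraction p q Hpq s s' :
  Rabs (ival (affine_I01 p q Hpq s') - ival (affine_I01 p q Hpq s)) <= Rabs (ival s' - ival s).
Proof.
  simpl. replace (p + ival s' * (q - p) - (p + ival s * (q - p)))
    with ((ival s' - ival s) * (q - p)) by ring.
  rewrite Rabs_mult, (Rabs_pos_eq (q - p)) by lra.
  pose proof (Rabs_pos (ival s' - ival s)). nra.
Qed.

Lemma affine_I01_range p q Hpq s : p <= ival (affine_I01 p q Hpq s) <= q.
Proof. destruct s as [s Hs]; simpl. nra. Qed.

Lemma joined_by_arc_of_pointwise_limit {Y} (T : topology Y) (g : nat -> I01 -> Y)
    (f : I01 -> Y) (A B S : Y -> Prop) (k : nat) (l r : R) :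
  (forall j, continuous_I01 T (g j)) -> (forall t, converges T (fun j => g j t) (f t)) ->
  0 <= l <= r /\ r <= 1 ->
  (forall j t, (k <= j)%nat -> l <= ival t <= r -> S (g j t)) ->
  t_open T A -> t_open T B ->
  (forall t, ival t = l -> A (f t)) -> (forall t, ival t = r -> B (f t)) ->
  joined_by_arc T A B S.
Proof.
  intros Hg Hconv Hlr HS HA HB Hl Hr.
  set (h := affine_I01 l r Hlr).
  destruct (Hconv (h i0) A HA) as [N1 HN1]; [apply Hl; simpl; ring|].
  destruct (Hconv (h i1) B HB) as [N2 HN2]; [apply Hr; simpl; ring|].
  set (j := Nat.max k (Nat.max N1 N2)).
  exists (fun s => g j (h s)). repeat split.
  - apply continuous_I01_comp_contraction; [apply Hg | apply affine_I01_contraction].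
  - intro s. apply HS; [unfold j; lia | apply affine_I01_range].
  - apply HN1. unfold j; lia.
  - apply HN2. unfold j; lia.
Qed.

Lemma pointwise_limit_eventually_in_closure {Y} (T : topology Y) (g : nat -> I01 -> Y)
    (f : I01 -> Y) (O S : Y -> Prop) :
  (forall j, continuous_I01 T (g j)) -> (forall t, converges T (fun j => g j t) (f t)) ->
  t_open T O -> (forall z, O z -> S z) -> (forall t, O (f t)) ->
  exists k l r, 0 <= l < r /\ r <= 1 /\
    forall j t, (k <= j)%nat -> l <= ival t <= r -> closure T S (g j t).
Proof.
  intros Hg Hconv HO OS Hf.
  destruct (Baire_I01 (fun k t => forall j, (k <= j)%nat -> closure T S (g j t)))
    as (k & l & r & Hlr & Hr1 & Hk).
  - intro k. apply closed_I01_forall. intros j _. apply closed_I01_closure_preimage, Hg.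
  - intro t. destruct (Hconv t O HO (Hf t)) as [N HN].
    exists N. intros j Hj. apply closure_incl, OS, HN, Hj.
  - exists k, l, r. split; [exact Hlr|]. split; [exact Hr1|].
    intros j t Hj Ht. exact (Hk t Ht j Hj).
Qed.

Fixpoint meet_upto {Y} (O : Y -> Prop) (G : nat -> Y -> Prop) (n : nat) : Y -> Prop :=
  match n with
  | 0%nat => fun z => O z /\ G 0%nat z
  | S n => fun z => meet_upto O G n z /\ G (S n) z
  end.

Lemma meet_upto_open {Y} (T : topology Y) O G n :
  t_open T O -> (forall k, t_open T (G k)) -> t_open T (meet_upto O G n).
Proof. intros HO HG. induction n; apply t_open_inter; auto. Qed.

Lemma meet_upto_sub {Y} (O : Y -> Prop) G n z :
  meet_upto O G n z -> O z /\ forall k, (k <= n)%nat -> G k z.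
Proof.
  induction n as [|n IH]; simpl.
  - intros [Oz Gz]. split; [exact Oz|]. intros k Hk. replace k with 0%nat by lia. exact Gz.
  - intros [Hn Gz]. destruct (IH Hn) as [Oz HG]. split; [exact Oz|].
    intros k Hk. destruct (Nat.eq_dec k (S n)) as [->|Hne]; [exact Gz | apply HG; lia].
Qed.

Lemma meet_upto_intro {Y} (O : Y -> Prop) G n z :
  O z -> (forall k, G k z) -> meet_upto O G n z.
Proof. intros Oz HG. induction n; simpl; auto. Qed.

Lemma first_countable_shrinking_open_base {Y} (T : topology Y) (y : Y) (O : Y -> Prop) :
  first_countable T -> t_open T O -> O y ->
  exists U : nat -> Y -> Prop,
    (forall n, t_open T (U n) /\ U n y /\ forall z, U n z -> O z) /\
    (forall W, t_open T W -> W y -> exists N, forall n z, (N <= n)%nat -> U n z -> W z).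
Proof.
  intros FC HO Oy. destruct (FC y) as [Nb [HNb Hbase]].
  destruct (choice (fun k G => t_open T G /\ G y /\ forall z, G z -> Nb k z)) as [G HG].
  { intro k. exact (HNb k). }
  exists (meet_upto O G). split.
  - intro n. split; [apply meet_upto_open; [exact HO | apply HG]|]. split.
    + apply meet_upto_intro; [exact Oy | apply HG].
    + intros z Hz. apply (meet_upto_sub O G n z Hz).
  - intros W HW Wy. destruct (Hbase W) as [N HN]; [exists W; auto|].
    exists N. intros n z Hn Hz. apply HN, (HG N), (proj2 (meet_upto_sub O G n z Hz)), Hn.
Qed.

Definition unjoinable_in {Y} (T : topology Y) (S U A B : Y -> Prop) (a b : Y) : Prop :=
  t_open T A /\ t_open T B /\ A a /\ B b /\ (forall z, A z -> U z) /\ (forall z, B z -> U z) /\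
  ~ joined_by_arc T A B S.

Lemma not_laac_at_unjoinable {Y} (T : topology Y) (y : Y) :
  ~ loc_almost_arcwise_connected_at T y ->
  exists V, nbhd T y V /\ forall U, t_open T U -> U y -> (forall z, U z -> V z) ->
    exists A B a b, unjoinable_in T (closure T V) U A B a b.
Proof.
  intro Hnot. apply not_all_ex_not in Hnot as [V HV]. apply imply_to_and in HV as [HVn HV].
  exists V. split; [exact HVn|]. intros U HU Uy UV. apply NNPP; intro Hall.
  apply HV. exists U. split; [exists U; auto|]. split; [exact UV|].
  intros A B HA HB [a Aa] [b Bb] AU BU. apply NNPP; intro Hj.
  apply Hall. exists A, B, a, b. repeat split; auto.
Qed.

Lemma unjoinable_choice {Y} (T : topology Y) (S : Y -> Prop) (U : nat -> Y -> Prop) :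
  (forall n, exists A B a b, unjoinable_in T S (U n) A B a b) ->
  exists (A B : nat -> Y -> Prop) (a b : nat -> Y),
    forall n, unjoinable_in T S (U n) (A n) (B n) (a n) (b n).
Proof.
  intro H.
  destruct (choice (fun n (X : (Y -> Prop) * (Y -> Prop) * (Y * Y)) =>
    unjoinable_in T S (U n) (fst (fst X)) (snd (fst X)) (fst (snd X)) (snd (snd X))))
    as [X HX].
  { intro n. destruct (H n) as (A & B & a & b & Hn). exists ((A, B), (a, b)). exact Hn. }
  exists (fun n => fst (fst (X n))), (fun n => snd (fst (X n))),
    (fun n => fst (snd (X n))), (fun n => snd (snd (X n))). exact HX.
Qed.

Section Spikes.

Context {Y : Type} (p q : nat -> R) (y : Y) (a b : nat -> Y).
Hypotheses (p_inj : forall n n', p n = p n' -> n = n')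
  (q_inj : forall n n', q n = q n' -> n = n')
  (p_neq_q : forall n n', p n <> q n').

Definition spike (t : I01) : Y :=
  match excluded_middle_informative (exists n, ival t = p n) with
  | left H => a (proj1_sig (constructive_indefinite_description _ H))
  | right _ =>
    match excluded_middle_informative (exists n, ival t = q n) with
    | left H => b (proj1_sig (constructive_indefinite_description _ H))
    | right _ => y
    end
  end.

Lemma spike_left n t : ival t = p n -> spike t = a n.
Proof.
  intro E. unfold spike. destruct excluded_middle_informative as [H|H].
  - destruct constructive_indefinite_description as [n' Hn']; simpl.
    f_equal. apply p_inj. congruence.
  - exfalso. eauto.
Qed.

Lemma spike_right n t : ival t = q n -> spike t = b n.
Proof.
  intro E. unfold spike. destruct excluded_middle_informative as [[n' Hn']|H].
  - exfalso. apply (p_neq_q n' n). congruence.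
  - destruct excluded_middle_informative as [H'|H'].
    + destruct constructive_indefinite_description as [n' Hn']; simpl.
      f_equal. apply q_inj. congruence.
    + exfalso. eauto.
Qed.

Lemma spike_cases t :
  spike t = y \/ exists n, (ival t = p n /\ spike t = a n) \/ (ival t = q n /\ spike t = b n).
Proof.
  destruct (classic (exists n, ival t = p n)) as [[n Hn]|Hp].
  - right. exists n. left. auto using spike_left.
  - destruct (classic (exists n, ival t = q n)) as [[n Hn]|Hq].
    + right. exists n. right. auto using spike_right.
    + left. unfold spike.
      destruct excluded_middle_informative; [contradiction|].
      destruct excluded_middle_informative; [contradiction | reflexivity].
Qed.

Lemma spike_in (P : Y -> Prop) t : P y -> (forall n, P (a n) /\ P (b n)) -> P (spike t).
Proof.
  intros Py Hab. destruct (spike_cases t) as [E|[n [[_ E]|[_ E]]]]; rewrite E; auto; apply Hab.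
Qed.

Lemma spike_Baire_H1 (T : topology Y) :
  (forall W, t_open T W -> W y -> exists N, forall n, (N <= n)%nat -> W (a n) /\ W (b n)) ->
  Baire_H1 T spike.
Proof.
  intro Hconv. apply Baire_H1_of_sparse_deviation with (y := y) (c := fun n => [p n; q n]).
  - intros t Ht. destruct (spike_cases t) as [E|[n [[Ep _]|[Eq _]]]];
      [contradiction | exists n; simpl; auto..].
  - intros W HW Wy. destruct (Hconv W HW Wy) as [N HN].
    exists (flat_map (fun n => [p n; q n]) (seq 0 N)). intros t HWt.
    apply in_flat_map.
    destruct (spike_cases t) as [E|[n [[Ep E]|[Eq E]]]]; rewrite E in HWt; [contradiction| |];
      exists n; (split; [apply in_seq; split; [lia|] | simpl; auto]);
      apply Nat.nle_gt; intro Hn; apply HWt, HN, Hn.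
Qed.

End Spikes.

Theorem mainTheorem10 (Y : Type) (T : topology Y) :
  first_countable T ->
  (forall f : I01 -> Y, Baire_H1 T f -> Baire_B1 T f) ->
  loc_almost_arcwise_connected T.
Proof.
  intros FC HB1 y. apply NNPP; intro Hy.
  destruct (not_laac_at_unjoinable T y Hy) as [V [[O [HO [Oy OV]]] Hbad]].
  destruct (first_countable_shrinking_open_base T y O FC HO Oy) as [U [HU Ushrink]].
  destruct (unjoinable_choice T (closure T V) U) as (A & B & a & b & Hab).
  { intro n. destruct (HU n) as (HUo & Uy & UO). apply Hbad; auto. }
  assert (HabU : forall n, U n (a n) /\ U n (b n)).
  { intro n. destruct (Hab n) as (_ & _ & Aa & Bb & AU & BU & _). auto. }
  set (f := spike dyadic_left dyadic_right y a b).
  destruct (HB1 f) as [g [Hg Hconv]].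
  { apply spike_Baire_H1; auto using dyadic_left_inj, dyadic_right_inj, dyadic_left_neq_right.
    intros W HW Wy. destruct (Ushrink W HW Wy) as [N HN].
    exists N. intros n Hn. split; apply (HN n); auto; apply HabU. }
  destruct (pointwise_limit_eventually_in_closure T g f O V Hg Hconv HO OV)
    as (k & l & r & Hlr & Hr1 & Hk).
  { intro t. apply spike_in; auto using dyadic_left_inj, dyadic_right_inj, dyadic_left_neq_right.
    intro n. split; apply (HU n), HabU. }
  destruct (dyadic_interval_dense l r) as [n [Hln Hnr]]; [lra | lra |].
  pose proof (dyadic_left_lt_right n). pose proof (dyadic_left_nonneg n).
  destruct (Hab n) as (HA & HB & An & Bn & _ & _ & Hnot). apply Hnot.
  apply (joined_by_arc_of_pointwise_limit T g f _ _ _ k (dyadic_left n) (dyadic_right n));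
    auto; try lra.
  - intros j t Hj Ht. apply Hk; [exact Hj | lra].
  - intros t Ht. unfold f. erewrite spike_left; eauto using dyadic_left_inj.
  - intros t Ht. unfold f. erewrite spike_right;
      eauto using dyadic_right_inj, dyadic_left_neq_right.
Qed.
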